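(* Let $\alpha$ be a proper fraction ($0<\alpha<1$) and let $u=(u_k)$ be a sequence with $u_k\neq 0$ for all $k\in\mathbb{N}$. Then the sequence space $c_0(\Gamma,\Delta^{(\alpha)},u)=\{x\in\omega:(\sum_{j=0}^k u_j\Delta^{(\alpha)}x_j)_{k}\in c_0\}$ is linearly isomorphic to $c_0$, and the sequence space $c(\Gamma,\Delta^{(\alpha)},u)=\{x\in\omega:(\sum_{j=0}^k u_j\Delta^{(\alpha)}x_j)_{k}\in c\}$ is linearly isomorphic to $c$.
   Context: $\omega$ denotes the space of all real or complex sequences, $c$ the space of convergent sequences and $c_0$ the space of null sequences; $\mathbb{N}=\{0,1,2,\dots\}$. For $x=(x_k)\in\omega$ the fractional difference operator is $\Delta^{(\alpha)}x_k=\sum_{i=0}^{\infty}(-1)^i\frac{\Gamma(\alpha+1)}{i!\,\Gamma(\alpha+1-i)}x_{k-i}$, where $\Gamma$ is the gamma function and $x_j=0$ for $j<0$. *)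

From Stdlib Require Import Reals Lra ZArith List.
From Coquelicot Require Import Coquelicot.
Open Scope R_scope.

Definition Gamma_pos (x : R) : R :=
  RInt_gen (fun t => Rpower t (x - 1) * exp (- t))
           (at_right 0) (Rbar_locally p_infty).

(* Gamma on all reals via the functional equation Gamma(x+1) = x Gamma(x):
   Gamma x = Gamma_pos (x + n) / (x (x+1) ... (x+n-1)), n = 1 - floor x,
   so that x + n lies in (0,1]+... i.e. x + n > 0.  (Values at non-positive
   integers are junk; they never occur below since 0 < alpha < 1.) *)
Definition Gamma_n (x : R) : nat := Z.to_nat (1 - Int_part x).

Definition Gamma (x : R) : R :=
  Gamma_pos (x + INR (Gamma_n x)) /
  fold_right Rmult 1 (map (fun k => x + INR k) (seq 0 (Gamma_n x))).

(* Fractional difference operator, with x_j = 0 for j < 0. *)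
Definition frac_diff (a : R) (x : nat -> R) (k : nat) : R :=
  sum_f_R0 (fun i => (-1) ^ i * Gamma (a + 1)
                     / (INR (fact i) * Gamma (a + 1 - INR i)) * x (k - i)%nat) k.

Definition Gamma_transform (a : R) (u x : nat -> R) (k : nat) : R :=
  sum_f_R0 (fun j => u j * frac_diff a x j) k.

Definition c0_seq (y : nat -> R) : Prop := is_lim_seq y 0.
Definition c_seq (y : nat -> R) : Prop := exists l : R, is_lim_seq y l.

Definition c0_Gamma (a : R) (u : nat -> R) (x : nat -> R) : Prop :=
  c0_seq (Gamma_transform a u x).
Definition c_Gamma (a : R) (u : nat -> R) (x : nat -> R) : Prop :=
  c_seq (Gamma_transform a u x).

Definition lin_isomorphic (X Y : (nat -> R) -> Prop) : Prop :=
  exists f : (nat -> R) -> (nat -> R),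
    (forall x y s t, X x -> X y ->
       f (fun k => s * x k + t * y k) = (fun k => s * f x k + t * f y k)) /\
    (forall x, X x -> Y (f x)) /\
    (forall x y, X x -> X y -> f x = f y -> x = y) /\
    (forall y, Y y -> exists x, X x /\ f x = y).

(* The transform x |-> (sum_{j<=k} u_j Delta^(a) x_j)_k is the composite of the
   causal convolution x |-> Delta^(a) x, whose leading coefficient
   Gamma(a+1)/Gamma(a+1) is 1, and of the weighted partial sums
   y |-> (sum_{j<=k} u_j y_j)_k with every u_j <> 0.  Both are lower triangular
   with invertible diagonal, hence linear bijections of the whole sequence space
   (inverted by forward substitution and by weighted differences), so
   c0(Gamma, Delta^(a), u) and c(Gamma, Delta^(a), u) are the preimages of c0 and
   c under a linear bijection.  The only analytic input is Gamma(a+1) <> 0, i.e.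
   convergence and positivity of the Euler integral of t^a e^(-t) over (0, oo):
   the integrand is at most 1 on (0, 1] and at most 6/t^2 on [1, oo). *)

From Stdlib Require Import Reals Lra Lia Factorial FunctionalExtensionality.
From Coquelicot Require Import Coquelicot.
Open Scope R_scope.

Definition seq_linear (T : (nat -> R) -> nat -> R) : Prop :=
  forall x y s t,
    T (fun k => s * x k + t * y k) = (fun k => s * T x k + t * T y k).

Lemma lin_isomorphic_preimage (T : (nat -> R) -> nat -> R) (P : (nat -> R) -> Prop) :
  seq_linear T -> (forall x y, T x = T y -> x = y) -> (forall y, exists x, T x = y) ->
  lin_isomorphic (fun x => P (T x)) P.
Proof.
  intros Hlin Hinj Hsurj. exists T. split; [|split; [|split]].
  - intros x y s t _ _. apply Hlin.
  - auto.
  - intros x y _ _. apply Hinj.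
  - intros y Hy. destruct (Hsurj y) as [x Hx]. exists x. subst y. auto.
Qed.

Lemma sum_f_R0_lin (f g : nat -> R) s t n :
  sum_f_R0 (fun i => s * f i + t * g i) n = s * sum_f_R0 f n + t * sum_f_R0 g n.
Proof. induction n as [|n IH]; simpl; [ring | rewrite IH; ring]. Qed.

Definition causal_conv (c x : nat -> R) (k : nat) : R :=
  sum_f_R0 (fun i => c i * x (k - i)%nat) k.

Definition weighted_partial_sum (u y : nat -> R) (k : nat) : R :=
  sum_f_R0 (fun j => u j * y j) k.

Lemma causal_conv_linear c : seq_linear (causal_conv c).
Proof.
  intros x y s t. apply functional_extensionality; intro k. unfold causal_conv.
  rewrite <- sum_f_R0_lin. apply sum_eq; intros i _. ring.
Qed.

Lemma weighted_partial_sum_linear u : seq_linear (weighted_partial_sum u).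
Proof.
  intros x y s t. apply functional_extensionality; intro k. unfold weighted_partial_sum.
  rewrite <- sum_f_R0_lin. apply sum_eq; intros j _. ring.
Qed.

Section CausalConvolution.
Variable c : nat -> R.
Hypothesis c0 : c 0%nat = 1.

Lemma causal_conv_0 x : causal_conv c x 0 = x 0%nat.
Proof. unfold causal_conv; simpl. rewrite c0. ring. Qed.

Lemma causal_conv_S x k :
  causal_conv c x (S k) = x (S k) + sum_f_R0 (fun i => c (S i) * x (k - i)%nat) k.
Proof.
  unfold causal_conv. rewrite decomp_sum by lia. simpl pred.
  rewrite c0, Nat.sub_0_r, Rmult_1_l. reflexivity.
Qed.

Lemma causal_conv_inj x y : causal_conv c x = causal_conv c y -> x = y.
Proof.
  intros Hxy.
  assert (Hupto : forall n j, (j <= n)%nat -> x j = y j).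
  { induction n as [|n IH]; intros j Hj.
    - replace j with 0%nat by lia.
      rewrite <- causal_conv_0, <- (causal_conv_0 y), Hxy. reflexivity.
    - destruct (Nat.le_gt_cases j n) as [Hjn|Hjn]; [auto|].
      replace j with (S n) by lia.
      assert (E := f_equal (fun z => z (S n)) Hxy). simpl in E.
      rewrite !causal_conv_S in E.
      rewrite (sum_eq (fun i => c (S i) * x (n - i)%nat)
                      (fun i => c (S i) * y (n - i)%nat)) in E.
      + lra.
      + intros i Hi. rewrite (IH (n - i)%nat) by lia. reflexivity. }
  apply functional_extensionality; intro j. apply (Hupto j); lia.
Qed.

(* Forward substitution: stage [n] determines the entries [0..n] of the
   solution of [causal_conv c x = y] and keeps the earlier ones. *)
Fixpoint causal_deconv_upto (y : nat -> R) (n : nat) : nat -> R :=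
  match n with
  | O => fun _ => y O
  | S m => fun j =>
      if (j <=? m)%nat then causal_deconv_upto y m j
      else y (S m) - sum_f_R0 (fun i => c (S i) * causal_deconv_upto y m (m - i)%nat) m
  end.

Definition causal_deconv (y : nat -> R) (j : nat) : R := causal_deconv_upto y j j.

Lemma causal_deconv_upto_stable y n j :
  (j <= n)%nat -> causal_deconv_upto y n j = causal_deconv y j.
Proof.
  induction n as [|n IH]; intros Hj.
  - replace j with 0%nat by lia. reflexivity.
  - destruct (Nat.le_gt_cases j n) as [Hjn|Hjn].
    + simpl. rewrite (proj2 (Nat.leb_le j n) Hjn). auto.
    + replace j with (S n) by lia. reflexivity.
Qed.

Lemma causal_conv_deconv y : causal_conv c (causal_deconv y) = y.
Proof.
  apply functional_extensionality; intros [|k].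
  - rewrite causal_conv_0. reflexivity.
  - rewrite causal_conv_S. unfold causal_deconv at 1. cbn [causal_deconv_upto].
    rewrite (proj2 (Nat.leb_gt (S k) k)) by lia.
    rewrite (sum_eq (fun i => c (S i) * causal_deconv y (k - i)%nat)
                    (fun i => c (S i) * causal_deconv_upto y k (k - i)%nat)).
    + ring.
    + intros i Hi. rewrite causal_deconv_upto_stable by lia. reflexivity.
Qed.

End CausalConvolution.

Section WeightedPartialSums.
Variable u : nat -> R.
Hypothesis u_neq0 : forall k, u k <> 0.

Definition weighted_diff (z : nat -> R) (j : nat) : R :=
  match j with
  | O => z O / u O
  | S i => (z (S i) - z i) / u (S i)
  end.

Lemma weighted_partial_sum_diff z : weighted_partial_sum u (weighted_diff z) = z.
Proof.
  apply functional_extensionality; intro k. unfold weighted_partial_sum.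
  induction k as [|k IH]; simpl.
  - field. auto.
  - rewrite IH. field. auto.
Qed.

Lemma weighted_partial_sum_inj y y' :
  weighted_partial_sum u y = weighted_partial_sum u y' -> y = y'.
Proof.
  intros H. apply functional_extensionality; intros [|k].
  - apply (Rmult_eq_reg_l (u 0%nat)); auto. exact (f_equal (fun z => z 0%nat) H).
  - apply (Rmult_eq_reg_l (u (S k))); auto.
    assert (E1 := f_equal (fun z => z (S k)) H).
    assert (E2 := f_equal (fun z => z k) H).
    unfold weighted_partial_sum in E1, E2; simpl in E1, E2. lra.
Qed.

End WeightedPartialSums.

Lemma Rabs_RInt_le_sym (f : R -> R) (D : R -> Prop) (e : R) :
  (forall p q, D p -> D q -> ex_RInt f p q) ->
  (forall p q, D p -> D q -> p <= q -> Rabs (RInt f p q) <= e) ->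
  forall p q, D p -> D q -> Rabs (RInt f p q) <= e.
Proof.
  intros Hex Hle p q Hp Hq. destruct (Rle_lt_dec p q) as [Hpq|Hqp]; [auto|].
  rewrite <- (opp_RInt_swap f q p) by auto.
  change (Rabs (- RInt f q p) <= e). rewrite Rabs_Ropp. apply Hle; auto; lra.
Qed.

Lemma filter_prod_at_right_0_p_infty d M : 0 < d ->
  filter_prod (at_right 0) (Rbar_locally p_infty) (fun ab => 0 < fst ab < d /\ M < snd ab).
Proof.
  intros Hd. exists (fun x => 0 < x < d) (fun y => M < y).
  - exists (mkposreal d Hd). intros x Hx Hx0. apply Rabs_def2 in Hx.
    unfold minus, plus, opp in Hx; simpl in Hx. lra.
  - exists M. auto.
  - auto.
Qed.

Definition gamma_integrand (b t : R) : R := Rpower t b * exp (- t).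

Section GammaIntegrand.
Variable b : R.
Hypothesis Hb : 0 <= b <= 1.

Lemma gamma_integrand_pos t : 0 < gamma_integrand b t.
Proof. apply Rmult_lt_0_compat; apply exp_pos. Qed.

Lemma gamma_integrand_continuous t : 0 < t -> continuous (gamma_integrand b) t.
Proof.
  intros Ht. apply (@ex_derive_continuous R_AbsRing R_NormedModule).
  unfold gamma_integrand, Rpower. auto_derive. exact Ht.
Qed.

Lemma ex_RInt_gamma_integrand p q : 0 < p -> 0 < q -> ex_RInt (gamma_integrand b) p q.
Proof.
  intros Hp Hq. apply (@ex_RInt_continuous R_CompleteNormedModule). intros t [Ht _].
  apply gamma_integrand_continuous. revert Ht. unfold Rmin. destruct Rle_dec; lra.
Qed.

Lemma gamma_integrand_le_1 t : 0 < t <= 1 -> gamma_integrand b t <= 1.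
Proof.
  intros Ht. unfold gamma_integrand. rewrite <- (Rmult_1_l 1).
  apply Rmult_le_compat; try (left; apply exp_pos).
  - replace 1 with (Rpower 1 b)
      by (unfold Rpower; rewrite ln_1, Rmult_0_r; apply exp_0).
    apply Rle_Rpower_l; lra.
  - rewrite <- exp_0. left. apply exp_increasing. lra.
Qed.

(* [t^b <= t] and, by Taylor, [t^3 / 6 <= exp t]. *)
Lemma gamma_integrand_le_inv_sq t : 1 <= t -> gamma_integrand b t <= 6 / (t * t).
Proof.
  intros Ht. unfold gamma_integrand.
  assert (Hpow : Rpower t b <= t).
  { rewrite <- (Rpower_1 t) at 2 by lra. apply Rle_Rpower; lra. }
  assert (Hexp : t ^ 3 / 6 <= exp t).
  { eapply Rle_trans; [|apply (exp_ge_taylor t 3); lra].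
    simpl. nra. }
  rewrite exp_Ropp.
  apply Rle_trans with (t * / exp t).
  { apply Rmult_le_compat_r; [left; apply Rinv_0_lt_compat, exp_pos | exact Hpow]. }
  replace (6 / (t * t)) with (t * / (t ^ 3 / 6)) by (field; lra).
  apply Rmult_le_compat_l; [lra|]. apply Rinv_le_contravar; [|exact Hexp].
  apply Rdiv_lt_0_compat; [apply pow_lt|]; lra.
Qed.
Lemma RInt_gamma_integrand_ge_0 p q : 0 < p <= q -> 0 <= RInt (gamma_integrand b) p q.
Proof.
  intros Hpq. apply RInt_ge_0; [lra | apply ex_RInt_gamma_integrand; lra |].
  intros t _. left. apply gamma_integrand_pos.
Qed.

Lemma Rabs_RInt_gamma_integrand_near_0 d p q :
  d <= 1 -> 0 < p < d -> 0 < q < d -> Rabs (RInt (gamma_integrand b) p q) <= d.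
Proof.
  intros Hd. revert p q. apply (Rabs_RInt_le_sym _ (fun t => 0 < t < d)).
  { intros p q Hp Hq. apply ex_RInt_gamma_integrand; lra. }
  intros p q Hp Hq Hpq. apply Rle_trans with ((q - p) * 1); [|lra].
  apply abs_RInt_le_const; [lra | apply ex_RInt_gamma_integrand; lra |].
  intros t Ht. rewrite Rabs_pos_eq by (left; apply gamma_integrand_pos).
  apply gamma_integrand_le_1; lra.
Qed.

Lemma is_RInt_6_div_sq p q :
  0 < p <= q -> is_RInt (fun t => 6 / (t * t)) p q (6 / p - 6 / q).
Proof.
  intros Hpq. replace (6 / p - 6 / q) with (minus (- 6 / q) (- 6 / p))
    by (unfold minus, plus, opp; simpl; field; lra).
  apply (is_RInt_derive (fun t => - 6 / t)); rewrite Rmin_left, Rmax_right by lra;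
    intros t Ht.
  - auto_derive; [lra | field; lra].
  - apply (@ex_derive_continuous R_AbsRing R_NormedModule). auto_derive.
    apply Rmult_integral_contrapositive_currified; lra.
Qed.

Lemma RInt_gamma_integrand_tail_le p q :
  1 <= p <= q -> RInt (gamma_integrand b) p q <= 6 / p.
Proof.
  intros Hpq. assert (Hq : 0 < 6 / q) by (apply Rdiv_lt_0_compat; lra).
  apply Rle_trans with (6 / p - 6 / q); [|lra].
  rewrite <- (is_RInt_unique _ _ _ _ (is_RInt_6_div_sq p q ltac:(lra))).
  apply RInt_le; [lra | apply ex_RInt_gamma_integrand; lra | eexists; apply is_RInt_6_div_sq; lra |].
  intros t Ht. apply gamma_integrand_le_inv_sq. lra.
Qed.

Lemma Rabs_RInt_gamma_integrand_tail M p q :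
  1 <= M -> M < p -> M < q -> Rabs (RInt (gamma_integrand b) p q) <= 6 / M.
Proof.
  intros HM. revert p q. apply (Rabs_RInt_le_sym _ (fun t => M < t)).
  { intros p q Hp Hq. apply ex_RInt_gamma_integrand; lra. }
  intros p q Hp Hq Hpq.
  rewrite Rabs_pos_eq by (apply RInt_gamma_integrand_ge_0; lra).
  apply Rle_trans with (6 / p); [apply RInt_gamma_integrand_tail_le; lra |].
  apply Rmult_le_compat_l; [lra |]. apply Rinv_le_contravar; lra.
Qed.

Lemma RInt_gamma_integrand_Chasles3 x1 y1 x2 y2 :
  0 < x1 -> 0 < y1 -> 0 < x2 -> 0 < y2 ->
  RInt (gamma_integrand b) x2 y2 = RInt (gamma_integrand b) x2 x1
    + RInt (gamma_integrand b) x1 y1 + RInt (gamma_integrand b) y1 y2.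
Proof.
  intros. rewrite <- (@RInt_Chasles R_CompleteNormedModule _ x2 x1 y2),
    <- (@RInt_Chasles R_CompleteNormedModule _ x1 y1 y2)
    by (apply ex_RInt_gamma_integrand; lra).
  unfold plus; simpl. ring.
Qed.

Lemma RInt_gamma_integrand_cvg :
  exists l, filterlim (fun ab => RInt (gamma_integrand b) (fst ab) (snd ab))
              (filter_prod (at_right 0) (Rbar_locally p_infty)) (locally l).
Proof.
  apply (filterlim_locally_cauchy (U := R_CompleteSpace)
           (FF := filter_prod_proper (FF := at_right_proper_filter 0) (FG := Rbar_locally_filter p_infty))).
  intros [e He]. set (d := Rmin (e / 3) 1). set (M := Rmax 1 (12 / e)).
  assert (d <= e / 3) by apply Rmin_l. assert (d <= 1) by apply Rmin_r.
  assert (Hd : 0 < d) by (apply Rmin_glb_lt; lra).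
  assert (1 <= M) by apply Rmax_l. assert (12 / e <= M) by apply Rmax_r.
  exists (fun ab => 0 < fst ab < d /\ M < snd ab). split.
  { apply filter_prod_at_right_0_p_infty. exact Hd. }
  intros [x1 y1] [x2 y2] [Hx1 Hy1] [Hx2 Hy2]; simpl in *.
  change (Rabs (RInt (gamma_integrand b) x2 y2 - RInt (gamma_integrand b) x1 y1) < e).
  rewrite (RInt_gamma_integrand_Chasles3 x1 y1 x2 y2) by lra.
  assert (Hnear := Rabs_RInt_gamma_integrand_near_0 d x2 x1 ltac:(lra) Hx2 Hx1).
  assert (Htail := Rabs_RInt_gamma_integrand_tail M y1 y2 ltac:(lra) Hy1 Hy2).
  assert (HM : 6 / M <= e / 2).
  { replace (e / 2) with (6 / (12 / e)) by (field; lra).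
    apply Rmult_le_compat_l; [lra |]. apply Rinv_le_contravar; [|lra].
    apply Rdiv_lt_0_compat; lra. }
  match goal with |- Rabs ?s < _ =>
    replace s with (RInt (gamma_integrand b) x2 x1 + RInt (gamma_integrand b) y1 y2) by ring end.
  eapply Rle_lt_trans; [apply Rabs_triang | lra].
Qed.

(* [RInt_gen] returns an unspecified value when the improper integral diverges,
   so positivity of Gamma needs convergence. *)
Lemma gamma_integral_exists_pos :
  exists l, is_RInt_gen (gamma_integrand b) (at_right 0) (Rbar_locally p_infty) l /\ 0 < l.
Proof.
  destruct RInt_gamma_integrand_cvg as [l Hl]. exists l. split.
  { unfold is_RInt_gen. refine (filterlimi_lim_ext_loc _ _ _ Hl).
    eapply filter_imp; [| apply (filter_prod_at_right_0_p_infty 1 1); lra].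
    intros [x y] [Hx Hy]; simpl in *.
    apply (@RInt_correct R_CompleteNormedModule). apply ex_RInt_gamma_integrand; lra. }
  set (c := RInt (gamma_integrand b) 1 2).
  assert (Hc : 0 < c).
  { apply RInt_gt_0; [lra | intros; apply gamma_integrand_pos |].
    intros; apply gamma_integrand_continuous; lra. }
  assert (Hcl : Rbar_le c l).
  { refine (filterlim_le (fun _ => c) _ c l _ (filterlim_const c) Hl).
    eapply filter_imp; [| apply (filter_prod_at_right_0_p_infty 1 2); lra].
    intros [x y] [Hx Hy]; simpl in *.
    rewrite (RInt_gamma_integrand_Chasles3 1 2 x y) by lra.
    assert (0 <= RInt (gamma_integrand b) x 1) by (apply RInt_gamma_integrand_ge_0; lra).
    assert (0 <= RInt (gamma_integrand b) 2 y) by (apply RInt_gamma_integrand_ge_0; lra).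
    fold c. lra. }
  simpl in Hcl. lra.
Qed.

End GammaIntegrand.

Lemma Gamma_n_ge_1 x : 1 <= x -> Gamma_n x = 0%nat.
Proof.
  intros Hx. unfold Gamma_n.
  assert (Hpos : (0 < Int_part x)%Z).
  { apply lt_IZR. destruct (base_Int_part x). lra. }
  lia.
Qed.

Lemma Gamma_eq_Gamma_pos x : 1 <= x -> Gamma x = Gamma_pos x.
Proof.
  intros Hx. unfold Gamma. rewrite Gamma_n_ge_1 by exact Hx. simpl.
  rewrite Rplus_0_r. unfold Rdiv. rewrite Rinv_1. apply Rmult_1_r.
Qed.

Lemma Gamma_pos_gt_0 x : 1 <= x <= 2 -> 0 < Gamma_pos x.
Proof.
  intros Hx. destruct (gamma_integral_exists_pos (x - 1)) as [l [Hl Hpos]]; [lra |].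
  unfold Gamma_pos.
  change (0 < RInt_gen (gamma_integrand (x - 1)) (at_right 0) (Rbar_locally p_infty)).
  rewrite (@is_RInt_gen_unique R_CompleteNormedModule _ _ _ _ _ _ Hl). exact Hpos.
Qed.

Definition frac_diff_coef (a : R) (i : nat) : R :=
  (-1) ^ i * Gamma (a + 1) / (INR (fact i) * Gamma (a + 1 - INR i)).

Lemma frac_diff_coef_0 a : 0 <= a <= 1 -> frac_diff_coef a 0 = 1.
Proof.
  intros Ha. unfold frac_diff_coef. simpl. rewrite Rminus_0_r.
  rewrite Gamma_eq_Gamma_pos by lra.
  assert (Gamma_pos (a + 1) <> 0) by (apply Rgt_not_eq, Gamma_pos_gt_0; lra).
  field. assumption.
Qed.

Theorem theorem2 (a : R) (u : nat -> R) :
  0 < a < 1 -> (forall k : nat, u k <> 0) ->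
  lin_isomorphic (c0_Gamma a u) c0_seq /\ lin_isomorphic (c_Gamma a u) c_seq.
Proof.
  intros Ha Hu.
  (* [Gamma_transform a u] is [T] once [frac_diff] is unfolded. *)
  set (T := fun x => weighted_partial_sum u (causal_conv (frac_diff_coef a) x)).
  assert (Hc0 : frac_diff_coef a 0 = 1) by (apply frac_diff_coef_0; lra).
  assert (Hlin : seq_linear T).
  { intros x y s t. unfold T. rewrite causal_conv_linear.
    apply weighted_partial_sum_linear. }
  assert (Hinj : forall x y, T x = T y -> x = y).
  { intros x y H. apply (causal_conv_inj _ Hc0), (weighted_partial_sum_inj u Hu), H. }
  assert (Hsurj : forall y, exists x, T x = y).
  { intros y. exists (causal_deconv (frac_diff_coef a) (weighted_diff u y)). unfold T.
    rewrite (causal_conv_deconv _ Hc0). apply weighted_partial_sum_diff, Hu. }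
  split; apply (lin_isomorphic_preimage T); assumption.
Qed.
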